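(* Let $G$ be a torsion-free group, $\alpha$ a zero divisor in $\mathbb{F}_2[G]$ with $|supp(\alpha)|=4$ and $|S_\alpha|=10$, and $\beta$ a mate of $\alpha$. Then every vertex of $\mathcal{Z}(\alpha,\beta)$ has degree in $\{3,4,5,6,7,8,10\}$.
   Context: $supp(\gamma)=\{x\in G:\gamma_x\ne0\}$; $S_\alpha=\{h^{-1}h':h\ne h',\ h,h'\in supp(\alpha)\}$. A mate of $\alpha$ is a non-zero $\beta$ with $\alpha\beta=0$ of minimal support size among all non-zero $\beta'$ with $\alpha\beta'=0$. $Z(\alpha,\beta)$ is the multigraph with vertex set $supp(\beta)$ whose edges are the sets $\{(h,h',g,g'),(h',h,g',g)\}$ with $h,h'\in supp(\alpha)$, $g,g'\in supp(\beta)$, $g\ne g'$, $hg=h'g'$, each joining $g$ and $g'$. $\mathcal{Z}(\alpha,\beta)$ is the simple graph obtained from $Z(\alpha,\beta)$ by replacing each set of multiple edges between two vertices by a single edge (so $g\sim g'$ in $\mathcal{Z}$ iff they are joined by at least one edge in $Z$). *)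

From HB Require Import structures.
From mathcomp Require Import all_boot finmap.

Set Implicit Arguments.
Unset Strict Implicit.
Unset Printing Implicit Defensive.

Local Open Scope fset_scope.

Section GroupAlgebraF2.

Variable G : groupType.

Definition torsion_free : Prop :=
  forall (x : G) (n : nat), (0 < n)%N -> (x ^+ n)%g = 1%g -> x = 1%g.

(* An element of F_2[G] is identified with its support, a finite subset of
   G (the coefficient of x is 1 iff x is in the set).  Hence
   supp(gamma) = gamma and "gamma <> 0" is "gamma != fset0". *)

(* number of pairs (h, g) in a x b with h g = x; the coefficient of x in the
   product a * b in F_2[G] is this number mod 2 *)
Definition conv_count (a b : {fset G}) (x : G) : nat :=
  \sum_(h <- a) \sum_(g <- b) ((h * g)%g == x).

Definition F2mul (a b : {fset G}) : {fset G} :=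
  [fset x in [fset (h * g)%g | h in a, g in b] | odd (conv_count a b x)].

Definition zero_divisor (a : {fset G}) : Prop :=
  a != fset0 /\
  exists b : {fset G}, b != fset0 /\ (F2mul a b = fset0 \/ F2mul b a = fset0).

Definition mate (a b : {fset G}) : Prop :=
  [/\ b != fset0, F2mul a b = fset0 &
      forall b' : {fset G}, b' != fset0 -> F2mul a b' = fset0 ->
        (#|` b| <= #|` b'|)%N].

Definition S_of (a : {fset G}) : {fset G} :=
  [fset (p.1^-1 * p.2)%g | p in [fset q in a `*` a | q.1 != q.2]].

(* adjacency in the simple graph calZ(alpha, beta) (vertex set supp beta):
   g ~ g' iff g <> g' and h g = h' g' for some h, h' in supp alpha *)
Definition zadj (a : {fset G}) (g g' : G) : bool :=
  (g != g') && has (fun h => has (fun h' => (h * g)%g == (h' * g')%g) a) a.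

Definition zdeg (a b : {fset G}) (g : G) : nat :=
  #|` [fset g' in b | zadj a g g'] |.

End GroupAlgebraF2.

From HB Require Import structures.
From mathcomp Require Import all_boot finmap.

Set Implicit Arguments.
Unset Strict Implicit.
Unset Printing Implicit Defensive.

Local Open Scope fset_scope.

(** Let P be the set of v in S_alpha with v g in beta, so that deg g = |P| <= 10.
    For h in supp alpha, the coefficient of h g in alpha beta = 0 counts h itself
    and the partners h' <> h of h, those with h'^-1 h in P; hence every h has an
    odd number of partners, at most |P| of them.
    - If |P| = 9 and v0 = h1^-1 h2 is the missing quotient, h2 has exactly the two
      partners supp alpha \ {h1, h2}.
    - If |P| <= 2, every h has a unique partner.  If P contains some x and x^-1,
      supp alpha splits into two partner pairs with quotients t and t^(+-1), so
      alpha = (x + y)(1 + t); then (1 + y^-1 x) (1 + t) beta = 0 forces y^-1 x or t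
      to fix a nonempty finite set under left translation, against torsion-freeness.
      Otherwise the 8 ordered pairs (h', h) and (h, h') of partners are distinct
      and have quotients in P u P^-1, so |S_alpha| <= 4 + (12 - 8) < 10. *)

Section FsetCounting.
Variable K : choiceType.

Lemma card_fsetM (K' : choiceType) (A : {fset K}) (B : {fset K'}) :
  #|` A `*` B| = #|` A| * #|` B|.
Proof.
have -> : A `*` B = [fset q in [seq (x, y) | x <- A, y <- B]].
  apply/fsetP => -[x y]; rewrite in_fsetM !inE /=.
  apply/andP/allpairsP => [[xA yB]|[[x' y'] /= [? ? [-> ->]]] //].
  by exists (x, y).
rewrite card_fseq undup_id ?size_allpairs //.
by apply: allpairs_uniq; rewrite ?fset_uniq // => -[? ?] [? ?] _ _ [-> ->].
Qed.

Definition offdiag (A : {fset K}) := [fset q in A `*` A | q.1 != q.2].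

Lemma card_offdiag (A : {fset K}) : #|` offdiag A| = #|` A| * #|` A| - #|` A|.
Proof.
have diagA : [fset (x, x) | x in A] `<=` A `*` A.
  by apply/fsubsetP => q /imfsetP [x xA ->]; rewrite in_fsetM xA.
have -> : offdiag A = A `*` A `\` [fset (x, x) | x in A].
  apply/fsetP => -[x y]; rewrite in_fsetD in_fsetM !inE /=.
  case: (eqVneq x y) => [<-|nxy]; rewrite ?andbF ?andbT.
    by case xA: (x \in A); rewrite ?andbF // in_imfset.
  suff -> : (x, y) \notin [fset (z, z) | z in A] by [].
  by apply/imfsetP => -[z _ [ex ey]]; rewrite ex ey eqxx in nxy.
by rewrite cardfsDS // card_fsetM card_in_imfset // => x y _ _ [].
Qed.

Lemma in_offdiag (A : {fset K}) q :
  (q \in offdiag A) = [&& q.1 \in A, q.2 \in A & q.1 != q.2].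
Proof. by rewrite !inE andbA. Qed.

Lemma leq_card_imfsetD (K' : choiceType) (phi : K -> K') (D X : {fset K}) :
  #|` [fset phi x | x in D]| <= #|` [fset phi x | x in X]| + #|` D `\` X|.
Proof.
have DU : [fset phi x | x in D] `<=` [fset phi x | x in X] `|` [fset phi x | x in D `\` X].
  apply/fsubsetP => _ /imfsetP [x xD ->]; rewrite in_fsetU.
  by case xX: (x \in X); [rewrite in_imfset | rewrite orbC in_imfset // in_fsetD xX].
apply: leq_trans (fsubset_leq_card DU) _.
apply: leq_trans (leq_card_fsetU _ _).1 _.
by rewrite leq_add2l leq_imfset_card.
Qed.

Lemma big_fset4 (A : {fset K}) (F : K -> nat) x1 x2 x3 x4 :
  #|` A| = 4 -> x1 \in A -> x2 \in A -> x3 \in A -> x4 \in A ->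
  x1 != x2 -> x1 != x3 -> x1 != x4 -> x2 != x3 -> x2 != x4 -> x3 != x4 ->
  \sum_(i <- A) F i = (F x1 + F x2 + F x3 + F x4)%N.
Proof.
move=> A4 x1A x2A x3A x4A n12 n13 n14 n23 n24 n34.
have x2A' : x2 \in A `\ x1 by rewrite in_fsetD1 eq_sym n12.
have x3A' : x3 \in A `\ x1 `\ x2 by rewrite !in_fsetD1 eq_sym n23 eq_sym n13.
have x4A' : x4 \in A `\ x1 `\ x2 `\ x3.
  by rewrite !in_fsetD1 eq_sym n34 eq_sym n24 eq_sym n14.
have A0 : A `\ x1 `\ x2 `\ x3 `\ x4 = fset0.
  apply: cardfs0_eq; move: A4.
  rewrite (cardfsD1 x1) x1A (cardfsD1 x2) x2A' (cardfsD1 x3) x3A' (cardfsD1 x4) x4A'.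
  by move=> [].
rewrite (big_fsetD1 x1) // (big_fsetD1 x2) // (big_fsetD1 x3) // (big_fsetD1 x4) //.
by rewrite A0 big_seq_fset0 /= addn0 !addnA.
Qed.

End FsetCounting.

Section GroupAlgebraF2.
Variable G : groupType.
Local Open Scope group_scope.
Implicit Types (a b : {fset G}) (g h u v x y : G).

Lemma bounded_orbit_order (P : pred G) (X : {fset G}) u y0 :
  (forall y, P y -> y \in X) -> (forall y, P y -> P (u * y)) -> P y0 ->
  exists2 n, 0 < n & u ^+ n = 1.
Proof.
move=> PX Pu Py0.
have Pk k : P (u ^+ k * y0).
  by elim: k => [|k IH]; rewrite ?expg0 ?mul1g // expgS -mulgA Pu.
pose s := [seq u ^+ k * y0 | k <- iota 0 (#|` X|).+1].
have : ~~ uniq s.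
  apply/negP => /uniq_leq_size sX.
  have : size s <= size (enum_fset X) by apply: sX => _ /mapP [k _ ->]; apply: PX.
  by rewrite size_map size_iota ltnn.
case/(uniqPn y0) => i [j [ij js]].
rewrite size_map size_iota in js.
rewrite !(nth_map 0) ?size_iota ?(ltn_trans ij) // !nth_iota ?(ltn_trans ij) //.
rewrite !add0n => /mulIg uij.
exists (j - i); first by rewrite subn_gt0.
by apply: (@mulgI _ (u ^+ i)); rewrite mulg1 -expgnDr subnKC ?uij // ltnW.
Qed.

Lemma tfree_bounded_orbit_eq1 (P : pred G) (X : {fset G}) u y0 :
  torsion_free G ->
  (forall y, P y -> y \in X) -> (forall y, P y -> P (u * y)) -> P y0 -> u = 1.
Proof. by move=> tfG PX Pu /(bounded_orbit_order PX Pu) [n /tfG]; apply. Qed.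

Lemma tfree_neq_inv x : torsion_free G -> x != 1 -> x != x^-1.
Proof.
move=> tfG; apply: contra_neq => xE; apply: (tfG x 2) => //.
by rewrite expg2 {1}xE mulVg.
Qed.

Lemma conv_countE a b x : conv_count a b x = \sum_(h <- a) ((h^-1 * x)%g \in b).
Proof.
apply: eq_bigr => h _.
rewrite -(count_uniq_mem _ (fset_uniq b)) -sum1_count [RHS]big_mkcond.
by apply: eq_bigr => y _ /=; rewrite (can2_eq (mulKg h) (mulVKg h)); case: eqP.
Qed.

Lemma conv_count_card a b x :
  conv_count a b x = #|` [fset h in a | h^-1 * x \in b]|.
Proof. by rewrite conv_countE card_fset_sum1 -big_fset_condE [RHS]big_mkcond. Qed.

Lemma F2mul_eq0_even a b x : F2mul a b = fset0 -> ~~ odd (conv_count a b x).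
Proof.
move=> ab0; apply/negP => odd_x.
suff : x \in F2mul a b by rewrite ab0 inE.
rewrite !inE odd_x andbT.
have : 0 < conv_count a b x by case: (conv_count a b x) odd_x.
rewrite conv_count_card cardfs_gt0 => /fset0Pn [h]; rewrite !inE => /andP [ha hb].
by apply/imfset2P; exists h => //; exists (h^-1 * x); rewrite ?mulVKg.
Qed.

Lemma S_ofP a v :
  reflect (exists h h', [/\ h \in a, h' \in a, h != h' & v = h^-1 * h'])
          (v \in S_of a).
Proof.
apply: (iffP idP) => [/imfsetP [q /= /[!inE] /andP [/andP [q1a q2a] nq] ->]|].
  by exists q.1, q.2.
case=> h [h' [ha h'a nh ->]]; apply/imfsetP; exists (h, h') => //=.
by rewrite !inE /= ha h'a nh.
Qed.

Lemma mem_S_of a h h' : h \in a -> h' \in a -> h != h' -> h^-1 * h' \in S_of a.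
Proof. by move=> ha h'a nh; apply/S_ofP; exists h, h'. Qed.

Lemma S_of_neq1 a v : v \in S_of a -> v != 1.
Proof.
case/S_ofP => h [h' [_ _ nh ->]]; apply: contra_neq nh => hh'1.
by rewrite -(mulVKg h h') hh'1 mulg1.
Qed.

Definition nbr_quot a b g := [fset v in S_of a | v * g \in b].

Definition partners a b g h :=
  [fset h' in a | (h' != h) && (h'^-1 * h \in nbr_quot a b g)].

Lemma in_nbr_quot a b g v :
  (v \in nbr_quot a b g) = (v \in S_of a) && (v * g \in b).
Proof. by rewrite inE. Qed.

Lemma in_partners a b g h h' :
  (h' \in partners a b g h) = [&& h' \in a, h' != h & h'^-1 * h \in nbr_quot a b g].
Proof. by rewrite inE. Qed.

Lemma zdegE a b g : zdeg a b g = #|` nbr_quot a b g|.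
Proof.
rewrite /zdeg; suff -> : [fset y in b | zadj a g y] = [fset v * g | v in nbr_quot a b g].
  by rewrite card_in_imfset // => v w _ _; apply: mulIg.
apply/fsetP => y; rewrite !inE.
apply/andP/imfsetP => [[yb /andP [ngy /hasP [h ha /hasP [h' h'a /eqP hgh'y]]]]|].
  have yE : y = h'^-1 * h * g by rewrite -mulgA hgh'y mulKg.
  exists (h'^-1 * h) => //; rewrite !inE -yE yb andbT mem_S_of //.
  by apply: contra_neq ngy => h'h; rewrite yE h'h mulVg mul1g.
case=> _ /[!inE] /andP [/S_ofP [h [h' [ha h'a nh ->]]] hb] ->.
split=> //; apply/andP; split.
  apply: contra_neq (S_of_neq1 (mem_S_of ha h'a nh)) => gE.
  by apply: (@mulIg _ g); rewrite mul1g -gE.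
by apply/hasP; exists h' => //; apply/hasP; exists h => //; rewrite mulgA mulVKg.
Qed.

Lemma odd_card_partners a b g h :
  F2mul a b = fset0 -> h \in a -> g \in b -> odd #|` partners a b g h|.
Proof.
move=> ab0 ha gb; have := F2mul_eq0_even (h * g) ab0; rewrite conv_count_card.
suff -> : [fset h' in a | h'^-1 * (h * g) \in b] = h |` partners a b g h.
  by rewrite cardfsU1 !inE eqxx andbF /= negbK.
apply/fsetP => h'; rewrite !inE; case: (eqVneq h' h) => [->|nh].
  by rewrite mulKg ha gb.
by case h'a: (h' \in a); rewrite ?(mem_S_of h'a ha nh) ?mulgA.
Qed.

Lemma card_partners_le a b g h :
  #|` partners a b g h| <= #|` nbr_quot a b g|.
Proof.
have <- : #|` [fset h'^-1 * h | h' in partners a b g h]| = #|` partners a b g h|.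
  by apply: card_in_imfset => x y _ _ /mulIg /invg_inj.
by apply: fsubset_leq_card; apply/fsubsetP => _ /imfsetP [h' /[!inE] /and3P [_ _ ?] ->].
Qed.

Lemma card_nbr_quot_neq a b g :
  ~~ odd #|` a| -> F2mul a b = fset0 -> g \in b ->
  #|` nbr_quot a b g|.+1 != #|` S_of a|.
Proof.
move=> a_even ab0 gb; apply/eqP => card_nbr.
have /cardfs1P [v0 Sv0] : #|` S_of a `\` nbr_quot a b g| == 1%N.
  by rewrite cardfsDS ?fset_sub // -card_nbr subSnn.
have : v0 \in S_of a `\` nbr_quot a b g by rewrite Sv0 inE.
rewrite in_fsetD !inE => /andP [v0_nbr v0S]; rewrite v0S /= in v0_nbr.
have nbrS v : v \in S_of a -> (v * g \in b) = (v != v0).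
  move=> vS; apply/idP/idP => [vgb|nv]; first by apply: contraNneq v0_nbr => <-.
  apply/negPn/negP => vgb; move/eqP: nv; apply.
  by apply/fset1P; rewrite -Sv0 in_fsetD !inE vS vgb.
case/S_ofP: v0S => h1 [h2 [h1a h2a n12 v0E]].
have card_a : #|` a| = (#|` a `\ h2 `\ h1|).+2.
  by rewrite (cardfsD1 h2) h2a (cardfsD1 h1) in_fsetD1 n12 h1a.
have := odd_card_partners ab0 h2a gb.
suff -> : partners a b g h2 = a `\ h2 `\ h1.
  by move: a_even; rewrite card_a !oddS negbK => /negbTE ->.
apply/fsetP => h; rewrite in_partners in_nbr_quot !in_fsetD1.
case: (eqVneq h h2) => [->|nh2] /=; rewrite ?andbF //.
case ha: (h \in a); rewrite ?andbF // andbT (mem_S_of ha h2a nh2) nbrS ?v0E ?mem_S_of //.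
by congr negb; apply/eqP/eqP => [/mulIg/invg_inj|->].
Qed.

Lemma F2mul_eq0_quotients_neq a b x1 x2 y1 y2 :
  torsion_free G -> F2mul a b = fset0 -> b != fset0 -> #|` a| = 4 ->
  x1 \in a -> x2 \in a -> y1 \in a -> y2 \in a ->
  x1 != x2 -> x1 != y1 -> x1 != y2 -> x2 != y1 -> x2 != y2 -> y1 != y2 ->
  x2^-1 * x1 != y2^-1 * y1.
Proof.
move=> tfG ab0 b0 a4 x1a x2a y1a y2a n12 n13 n14 n23 n24 n34; apply/eqP => tE.
set t := x2^-1 * x1 in tE.
(* F is the support of (1 + t) b; the coefficients of a b = 0 make it invariant
   under y |-> y2^-1 x2 y. *)
pose F y := (y \in b) (+) (t^-1 * y \in b).
have F_shift x : F (x2^-1 * x) = F (y2^-1 * x).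
  have := F2mul_eq0_even x ab0.
  rewrite conv_countE (big_fset4 _ a4 x2a x1a y2a y1a); try by rewrite // eq_sym.
  have tK z y : (z * t)^-1 * y = t^-1 * (z^-1 * y) by rewrite invgM mulgA.
  rewrite -[x1](mulVKg x2) -/t -[y1](mulVKg y2) -tE !tK /F.
  by case: (_ \in b); case: (_ \in b); case: (_ \in b); case: (_ \in b).
have F0 y : ~~ F y.
  apply/negP => Fy.
  have u1 : y2^-1 * x2 = 1.
    apply: (tfree_bounded_orbit_eq1 (X := b `|` [fset t * z | z in b]) tfG _ _ Fy).
      move=> z; rewrite in_fsetU /F; case: (z \in b) => //= tzb.
      by apply/imfsetP; exists (t^-1 * z); rewrite ?mulVKg.
    by move=> z Fz; rewrite -mulgA -F_shift mulKg.
  by rewrite -(mulVKg y2 x2) u1 mulg1 eqxx in n24.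
have [y0 y0b] := fset0Pn _ b0.
have t1 : t^-1 = 1.
  apply: (tfree_bounded_orbit_eq1 (P := fun z => z \in b) (X := b) tfG _ _ y0b) => // z zb.
  by move: (F0 z); rewrite /F zb; case: (_ \in b).
by rewrite -(mulVKg x2 x1) -/t -(invgK t) t1 invg1 mulg1 eqxx in n12.
Qed.

End GroupAlgebraF2.

Section DegreeAtLeastThree.
Variable G : groupType.
Local Open Scope group_scope.
Variables (alpha beta : {fset G}) (g : G).
Hypotheses (ab0 : F2mul alpha beta = fset0) (a4 : #|` alpha| = 4) (gb : g \in beta).
Local Notation P := (nbr_quot alpha beta g).
Local Notation partner := (partners alpha beta g).
Hypothesis P_le2 : #|` P| <= 2.

Lemma partners_fset1 h : h \in alpha -> exists h', partner h = [fset h'].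
Proof.
move=> ha; apply/cardfs1P; have := odd_card_partners ab0 ha gb.
have := leq_trans (card_partners_le alpha beta g h) P_le2.
by case: #|` _| => [|[|[]]].
Qed.

Lemma partner_quot h h' : h \in alpha -> h' \in partner h -> h'^-1 * h \in P.
Proof. by move=> ha; rewrite in_partners => /and3P []. Qed.

Lemma card_S_of_le8 : (forall x, x \in P -> x^-1 \notin P) -> #|` S_of alpha| <= 8.
Proof.
move=> P_noinv.
pose phi (q : G * G) := q.1^-1 * q.2.
pose X1 := [fset q in offdiag alpha | phi q \in P].
pose X2 := [fset (q.2, q.1) | q in X1].
have X1P q : (q \in X1) = (q.2 \in alpha) && (q.1 \in partner q.2).
  by rewrite in_partners !inE; case: (q.1 \in alpha); case: (q.2 \in alpha).
have card_X1 : #|` X1| = 4.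
  rewrite -a4; have <- : [fset q.2 | q in X1] = alpha.
    apply/fsetP => h; apply/idP/idP => [/imfsetP [q] /[!X1P] /andP [? _] -> //|ha].
    have [h' ph] := partners_fset1 ha.
    have hX1 : (h', h) \in X1 by rewrite X1P /= ha ph in_fset1 eqxx.
    exact: (in_imfset _ (fun q => q.2) hX1).
  apply/esym/card_in_imfset => -[h1 h] [h2 h'] /[!X1P] /= /andP [ha h1p] /andP [_ h2p] hh'.
  have [? ph] := partners_fset1 ha; move: h1p h2p; rewrite -hh' ph.
  by move=> /fset1P -> /fset1P ->.
have X2P q : (q \in X2) = ((q.2, q.1) \in X1).
  apply/imfsetP/idP => [[[h h'] ? ->] //|qX1]; exists (q.2, q.1) => //; by case: q qX1.
have card_X2 : #|` X2| = 4 by rewrite card_in_imfset // => -[? ?] [? ?] _ _ [-> ->].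
have phiX1 q : q \in X1 -> phi q \in P by rewrite X1P => /andP [qa /(partner_quot qa)].
have X12 : X1 `&` X2 = fset0.
  apply/fsetP => q; rewrite in_fsetI X2P in_fset0; apply/negP => /andP [/phiX1 + /phiX1].
  by rewrite /phi /= -[q.2^-1 * q.1]invgK invgM invgK => /P_noinv /negP.
have XD : X1 `|` X2 `<=` offdiag alpha.
  apply/fsubsetP => q; rewrite in_fsetU X2P !X1P /= in_offdiag.
  case/orP => /andP [qa /[!in_partners] /and3P [q'a nq _]].
    by rewrite q'a qa nq.
  by rewrite q'a qa eq_sym nq.
have img : [fset phi q | q in X1 `|` X2] `<=` P `|` [fset y^-1 | y in P].
  apply/fsubsetP => _ /imfsetP [q /[!in_fsetU] qX ->].
  case/orP: qX => [/phiX1 -> //|]; rewrite X2P => /phiX1 qP; apply/orP; right.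
  apply/imfsetP; exists (phi (q.2, q.1)) => //.
  by rewrite /phi invgM invgK.
have -> : S_of alpha = [fset phi q | q in offdiag alpha] by [].
apply: leq_trans (leq_card_imfsetD phi _ (X1 `|` X2)) _.
rewrite cardfsDS // card_offdiag a4 cardfsU X12 cardfs0 card_X1 card_X2 -[8]/(4 + 4)%N.
apply: leq_add => //; apply: leq_trans (fsubset_leq_card img) _.
apply: leq_trans (leq_card_fsetU _ _).1 _.
by rewrite -[4]/(2 + 2)%N leq_add // (leq_trans (leq_imfset_card _ _ _)).
Qed.

Lemma partners_sym h h' : (forall y, y \in P -> y^-1 \in P) ->
  h \in alpha -> h' \in partner h -> h \in partner h'.
Proof.
move=> P_inv ha; rewrite !in_partners => /and3P [h'a nh /P_inv].
by rewrite invgM invgK ha eq_sym nh.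
Qed.

Lemma partner_pairs : (forall y, y \in P -> y^-1 \in P) ->
  exists h1 h2 h3 h4,
    [/\ [/\ h1 \in alpha, h2 \in alpha, h3 \in alpha & h4 \in alpha],
        uniq [:: h1; h2; h3; h4], h2^-1 * h1 \in P & h4^-1 * h3 \in P].
Proof.
move=> P_inv.
have [h1 h1a] : exists h1, h1 \in alpha by apply/fset0Pn; rewrite -cardfs_gt0 a4.
have [h2 p1] := partners_fset1 h1a.
have h2p : h2 \in partner h1 by rewrite p1 in_fset1.
have /[!in_partners] /and3P [h2a n21 _] := h2p.
have [h3 [h3a n31 n32]] : exists h3, [/\ h3 \in alpha, h3 != h1 & h3 != h2].
  have : alpha `\ h1 `\ h2 != fset0.
    have : (#|` alpha `\ h1 `\ h2|).+2 = 4.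
      by rewrite -a4 (cardfsD1 h1 alpha) h1a (cardfsD1 h2 (alpha `\ h1)) in_fsetD1 n21 h2a.
    by rewrite -cardfs_gt0 => -[->].
  by case/fset0Pn => h3 /[!in_fsetD1] /and3P [? ? ?]; exists h3.
have [h4 p3] := partners_fset1 h3a.
have h4p : h4 \in partner h3 by rewrite p3 in_fset1.
have /[!in_partners] /and3P [h4a n43 _] := h4p.
have n41 : h4 != h1.
  apply: contra_neq n32 => h41; apply/fset1P; rewrite -p1.
  by apply: partners_sym => //; rewrite -h41.
have n42 : h4 != h2.
  apply: contra_neq n31 => h42; have [h5 p2] := partners_fset1 h2a.
  have := partners_sym P_inv h1a h2p; rewrite p2 => /fset1P ->.
  by apply/fset1P; rewrite -p2 -h42 partners_sym.
exists h1, h2, h3, h4; split; rewrite ?(partner_quot h1a h2p) ?(partner_quot h3a h4p) //.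
rewrite /= !inE !negb_or; apply/and4P; split=> //; [apply/and3P | apply/andP | ];
  by try split; rewrite eq_sym.
Qed.

Hypotheses (tfG : torsion_free G) (b0 : beta != fset0).

Lemma nbr_quot_no_inverse_pair x : x \in P -> x^-1 \notin P.
Proof.
move=> xP; apply/negP => xiP.
have x_neq_xi : x != x^-1.
  by move: xP; rewrite in_nbr_quot => /andP [/S_of_neq1 /(tfree_neq_inv tfG)].
have PE : P = [fset x; x^-1].
  apply/eqP; rewrite eq_sym eqEfcard cardfs2 x_neq_xi P_le2 andbT.
  by apply/fsubsetP => y; rewrite in_fset2 => /orP [] /eqP ->.
have P_inv y : y \in P -> y^-1 \in P.
  by rewrite PE !in_fset2 !(can2_eq invgK invgK) invgK orbC.
have [h1 [h2 [h3 [h4 [[h1a h2a h3a h4a] uniq_h q1P q3P]]]]] := partner_pairs P_inv.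
move: uniq_h; rewrite /= !inE !negb_or.
case/and4P => /and3P [n12 n13 n14] /andP [n23 n24] n34 _.
have [q31|q31] : h4^-1 * h3 = h2^-1 * h1 \/ h4^-1 * h3 = (h2^-1 * h1)^-1.
  move: q1P q3P; rewrite PE !in_fset2.
  by case/orP => /eqP -> /orP [] /eqP ->; rewrite ?invgK; auto.
- have := F2mul_eq0_quotients_neq tfG ab0 b0 a4 h1a h2a h3a h4a n12 n13 n14 n23 n24 n34.
  by rewrite q31 eqxx.
- have n21 : h2 != h1 by rewrite eq_sym.
  have := F2mul_eq0_quotients_neq tfG ab0 b0 a4 h2a h1a h3a h4a n21 n23 n24 n13 n14 n34.
  by rewrite q31 invgM invgK eqxx.
Qed.

End DegreeAtLeastThree.

Lemma card_nbr_quot_ge3 (G : groupType) (a b : {fset G}) (g : G) :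
  torsion_free G -> F2mul a b = fset0 -> b != fset0 ->
  #|` a| = 4 -> #|` S_of a| = 10 -> g \in b -> 3 <= #|` nbr_quot a b g|.
Proof.
move=> tfG ab0 b0 a4 S10 gb; rewrite leqNgt; apply/negP => P_le2.
have := card_S_of_le8 ab0 a4 gb P_le2 (nbr_quot_no_inverse_pair ab0 a4 gb P_le2 tfG b0).
by rewrite S10.
Qed.

Theorem mainTheorem19 (G : groupType) (alpha beta : {fset G}) :
  torsion_free G ->
  zero_divisor alpha ->
  #|` alpha| = 4%N ->
  #|` S_of alpha| = 10%N ->
  mate alpha beta ->
  forall g : G, g \in beta ->
    zdeg alpha beta g \in [:: 3; 4; 5; 6; 7; 8; 10]%N.
Proof.
move=> tfG _ a4 S10 [b0 ab0 _] g gb; rewrite zdegE.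
have ge3 := card_nbr_quot_ge3 tfG ab0 b0 a4 S10 gb.
have ne9 : #|` nbr_quot alpha beta g|.+1 != 10.
  by rewrite -S10 card_nbr_quot_neq ?a4.
have le10 : #|` nbr_quot alpha beta g| <= 10.
  by rewrite -S10 fsubset_leq_card ?fset_sub.
move: ge3 ne9 le10; case: #|` _| => // n.
by do 10! case: n => [|n] //.
Qed.
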